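(* Let $E$ be a real or complex Banach space, $T$ a strongly continuous semigroup on $E$, $\mathcal U$ a countably incomplete ultrafilter on a set $I$, and ${}^*$ the corresponding bounded ultrapower. With $\Phi:\ell^\infty_I(E)/c_{\mathcal U}\to\widehat E$, $\Phi(\langle f_i\rangle+c_{\mathcal U})=\widehat f$ ($f$ the $\mathcal U$-class of $\langle f_i\rangle$), and $\iota: m^T/(c_{\mathcal U}\cap m^T)\to\ell^\infty_I(E)/c_{\mathcal U}$, $\iota(\langle f_i\rangle+c_{\mathcal U}\cap m^T)=\langle f_i\rangle+c_{\mathcal U}$, we have $\Phi(\iota(m^T/(c_{\mathcal U}\cap m^T)))\subseteq\widehat E_T$.
   Context: A semigroup is a map $T:[0,\infty)\to\mathcal L(E)$ with $T(0)=\mathrm{Id}$, $T(s+t)=T(s)T(t)$; strongly continuous means $\lim_{t\to0}\|T(t)f-f\|=0$ for all $f$. $\ell^\infty_I(E)$: bounded families in $E$ with sup-norm; $c_{\mathcal U}$: families such that for every $\varepsilon>0$ some $J\in\mathcal U$ has $\|f_i\|<\varepsilon$ for $i\in J$; $\tilde T(t)\langle f_i\rangle=\langle T(t)f_i\rangle$; $m^T=\{x\in\ell^\infty_I(E):\lim_{t\to0}\|\tilde T(t)x-x\|=0\}$. In the bounded ultrapower ${}^*E$ consists of $\mathcal U$-classes of $I$-sequences in $E$. A nonstandard element is finite if its norm is bounded by a standard natural number, infinitesimal if its norm is below every standard $1/n$. $\widehat E=\mathrm{fin}({}^*E)/E_0$ (finite elements modulo infinitesimal ones), with class map $f\mapsto\widehat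 f$. $E_T$ is the set of finite $f\in{}^*E$ such that for every standard $\varepsilon>0$ there is standard $\delta>0$ with $\|{}^*T(t)f-f\|<\varepsilon$ for all positive nonstandard $t<\delta$ (equivalently $\|{}^*T(h)f-f\|$ infinitesimal for all positive infinitesimal $h$); $\widehat E_T=E_T/E_0$. *)

From HB Require Import structures.
From mathcomp Require Import all_boot all_order all_algebra.
From mathcomp Require Import all_classical all_reals all_analysis.
Set Implicit Arguments. Unset Strict Implicit. Unset Printing Implicit Defensive.
Import Order.TTheory GRing.Theory Num.Theory.
Import numFieldNormedType.Exports.
Local Open Scope classical_set_scope.
Local Open Scope ring_scope.

(* A strongly continuous semigroup T : [0,oo) -> L(E) (values of T at
   negative times are irrelevant). *)
Definition C0_semigroup (R : realType) (E : normedModType R)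
  (T : R -> {linear E -> E}) : Prop :=
  (forall t, 0 <= t -> continuous (T t)) /\
  (forall f, T 0 f = f) /\
  (forall s t, 0 <= s -> 0 <= t -> forall f, T (s + t) f = T s (T t f)) /\
  (forall f, T t f @[t --> 0^'+] --> f).

Definition countably_incomplete (I : Type) (U : set_system I) : Prop :=
  exists J : nat -> set I, (forall n, U (J n)) /\ ~ U (\bigcap_n J n).

Definition bounded_family (R : realType) (E : normedModType R) (I : Type)
  (x : I -> E) : Prop := exists M : R, forall i, `|x i| <= M.

Definition mT (R : realType) (E : normedModType R) (T : R -> {linear E -> E})
  (I : Type) (x : I -> E) : Prop :=
  bounded_family x /\
  forall eps : R, 0 < eps -> exists2 delta : R, 0 < delta &
    forall t : R, 0 < t < delta -> forall i, `|T t (x i) - x i| <= eps.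

(* Nonstandard objects of the ultrapower are given by representatives
   (I-sequences); all the following notions depend only on U-classes. *)

Definition ufinite (R : realType) (E : normedModType R) (I : Type)
  (U : set_system I) (f : I -> E) : Prop :=
  exists n : nat, U [set i | `|f i| <= n%:R].

Definition uinfinitesimal (R : realType) (E : normedModType R) (I : Type)
  (U : set_system I) (f : I -> E) : Prop :=
  forall n : nat, U [set i | `|f i| < n.+1%:R^-1].

Definition in_ET (R : realType) (E : normedModType R) (T : R -> {linear E -> E})
  (I : Type) (U : set_system I) (f : I -> E) : Prop :=
  ufinite U f /\
  forall eps : R, 0 < eps -> exists2 delta : R, 0 < delta &
    forall t : I -> R, U [set i | 0 < t i < delta] ->
      U [set i | `|T (t i) (f i) - f i| < eps].

(* membership of the class hat f (f finite) in hat E_T = E_T / E_0 *)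
Definition in_hatET (R : realType) (E : normedModType R) (T : R -> {linear E -> E})
  (I : Type) (U : set_system I) (f : I -> E) : Prop :=
  exists g : I -> E, in_ET T U g /\ uinfinitesimal U (fun i => g i - f i).

From HB Require Import structures.
From mathcomp Require Import all_boot all_order all_algebra.
From mathcomp Require Import all_classical all_reals all_analysis.
Set Implicit Arguments. Unset Strict Implicit. Unset Printing Implicit Defensive.
Import Order.TTheory GRing.Theory Num.Theory.
Import numFieldNormedType.Exports.
Local Open Scope classical_set_scope.
Local Open Scope ring_scope.

(* Every x in m^T is its own witness: a bound on the standard family x makes
   its class finite, and the uniformity in i of ||T(t) x_i - x_i|| -> 0
   transfers to every positive hyperreal t below the standard delta, so the
   class of x already lies in E_T. *)

Section UltrapowerClasses.
Variables (R : realType) (E : normedModType R) (I : Type) (U : set_system I).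
Hypothesis FU : Filter U.

Lemma bounded_family_ufinite (x : I -> E) : bounded_family x -> ufinite U x.
Proof.
move=> [M xM]; exists (Num.truncn `|M|).+1; apply: filterE => i /=.
rewrite (le_trans (xM i)) // (le_trans (ler_norm M)) // ltW //.
exact: truncnS_gt.
Qed.

Lemma uinfinitesimal_subrr (x : I -> E) : uinfinitesimal U (fun i => x i - x i).
Proof. by move=> n; apply: filterE => i /=; rewrite subrr normr0 invr_gt0. Qed.

Lemma mT_in_ET (T : R -> {linear E -> E}) (x : I -> E) :
  mT T x -> in_ET T U x.
Proof.
move=> [xb xT]; split; first exact: bounded_family_ufinite.
move=> eps eps_gt0.
have [delta delta_gt0 xTdelta] := xT _ (divr_gt0 eps_gt0 (ltr0n R 2)).
exists delta => // t; apply: filterS => i /xTdelta/(_ i)/le_lt_trans; apply.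
by rewrite ltr_pdivrMr // ltr_pMr // ltr1n.
Qed.

Lemma in_ET_in_hatET (T : R -> {linear E -> E}) (f : I -> E) :
  in_ET T U f -> in_hatET T U f.
Proof. by move=> fET; exists f; split; last exact: uinfinitesimal_subrr. Qed.

End UltrapowerClasses.

Theorem mainTheorem10 (R : realType) (E : completeNormedModType R)
  (T : R -> {linear E -> E}) (I : Type) (U : set_system I) :
  C0_semigroup T -> UltraFilter U -> countably_incomplete U ->
  forall x : I -> E, mT T x -> in_hatET T U x.
Proof.
move=> _ [[_ FU] _] _ x xmT.
exact: (in_ET_in_hatET (T := T) FU (mT_in_ET FU xmT)).
Qed.
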